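(* Let $p\in\mathbb{R}^3$ and suppose that the Hugoniot curve $\mathcal{H}(p)$ meets the characteristic plane $\mathcal{C}$ in two distinct points $q_0$ and $q_1$. Then one of these points lies in $\mathcal{C}_s$ and the other lies in $\mathcal{C}_f$. Moreover, the value of $\sigma$ at the point lying in $\mathcal{C}_s$ is strictly smaller than the value of $\sigma$ at the point lying in $\mathcal{C}_f$.
   Context: Fix real constants $a_1,a_2,a_3,a_4$ and $b_1>1$, and put $c=a_3-a_2$, assumed $>0$. The model is the system $W_t+F(W)_x=0$, $W=(u,v)$, with flux $F=(f,g)$, $f(u,v)=(b_1+1)u^2/2+v^2/2+a_1u+a_2v$, $g(u,v)=uv+a_3u+a_4v$. We work in coordinates $(z,\tau,Y)\in\mathbb{R}^3$ (a chart of the wave manifold). Define $\widetilde U(z,\tau)=\frac{2cz}{z^2+1}+c\tau(z^2-1)$, $V_1(z,\tau)=\frac{c}{z^2+1}+c\tau z$, $U=(\widetilde U-a_1+a_4)/b_1$, $V=V_1-a_3$. The point $(z,\tau,Y)$ represents the shock with left state $W(z,\tau,Y)=(U+zY/2,\;V+Y/2)$ and right state $W'(z,\tau,Y)=(U-zY/2,\;V-Y/2)$, with shock speed $\sigma(z,\tau,Y)=\frac{c}{b_1}[(b_1+1)z^2-1]\tau+\frac{c}{b_1}\frac{(b_1+2)z}{z^2+1}+\sigma_0$, where $\sigma_0=[(b_1+1)a_4-a_1]/b_1$. For $p\in\mathbb{R}^3$, the Hugoniot curve is $\mathcal{H}(p)=\{q\in\mathbb{R}^3: W(q)=W(p)\}$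 and the Hugoniot$'$ curve is $\mathcal{H}'(p)=\{q: W'(q)=W'(p)\}$ (each is the graph of a function of $z\in\mathbb{R}$). The characteristic plane is $\mathcal{C}=\{Y=0\}$, with $\mathcal{C}_s=\{Y=0,\tau<0\}$ and $\mathcal{C}_f=\{Y=0,\tau>0\}$. *)

From Stdlib Require Import Reals.
Open Scope R_scope.

(* A point of the chart (z, tau, Y) of the wave manifold. *)
Record pt := mkpt { pz : R; ptau : R; pY : R }.

Record params := mkparams { a1 : R; a2 : R; a3 : R; a4 : R; b1 : R }.

Section Model.
Variable P : params.
Let a1 := a1 P. Let a2 := a2 P. Let a3 := a3 P. Let a4 := a4 P. Let b1 := b1 P.

Definition cc : R := a3 - a2.

Definition Utilde (z tau : R) : R :=
  2 * cc * z / (z ^ 2 + 1) + cc * tau * (z ^ 2 - 1).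
Definition V1 (z tau : R) : R := cc / (z ^ 2 + 1) + cc * tau * z.
Definition UU (z tau : R) : R := (Utilde z tau - a1 + a4) / b1.
Definition VV (z tau : R) : R := V1 z tau - a3.

Definition Wl (q : pt) : R * R :=
  (UU (pz q) (ptau q) + pz q * pY q / 2, VV (pz q) (ptau q) + pY q / 2).
Definition Wr (q : pt) : R * R :=
  (UU (pz q) (ptau q) - pz q * pY q / 2, VV (pz q) (ptau q) - pY q / 2).

Definition sigma0 : R := ((b1 + 1) * a4 - a1) / b1.
Definition shock_speed (q : pt) : R :=
  cc / b1 * ((b1 + 1) * pz q ^ 2 - 1) * ptau q
  + cc / b1 * ((b1 + 2) * pz q / (pz q ^ 2 + 1)) + sigma0.

Definition Hugoniot (p q : pt) : Prop := Wl q = Wl p.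
Definition Hugoniot' (p q : pt) : Prop := Wr q = Wr p.

End Model.

Definition inC (q : pt) : Prop := pY q = 0.
Definition inCs (q : pt) : Prop := pY q = 0 /\ ptau q < 0.
Definition inCf (q : pt) : Prop := pY q = 0 /\ ptau q > 0.

From Stdlib Require Import Reals Lra Psatz.
Open Scope R_scope.

(* On the characteristic plane both states equal (U, V), and the chart
   satisfies the linear relation  z U~ - (z^2 - 1) V1 = c.  The points of
   H(p) on C share the same (U~, V1) = (A, B), so their z-coordinates are the
   two roots of  B z^2 - A z + (c - B) = 0,  whence A = (z0 + z1) B and
   c = (1 + z0 z1) B, so B <> 0.  Moreover  c (z^2 + 1) tau = 2 z B - A  and
   sigma = A / b1 + z B + sigma0, which gives
   c (z0^2 + 1) tau0 = (z0 - z1) B = - c (z1^2 + 1) tau1 = sigma(q0) - sigma(q1). *)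

Lemma pt_eq (q q' : pt) :
  pz q = pz q' -> ptau q = ptau q' -> pY q = pY q' -> q = q'.
Proof. destruct q, q'; simpl; intros -> -> ->; reflexivity. Qed.

Lemma chord_relations (c A B z0 z1 : R) :
  z0 <> z1 ->
  z0 * A - (z0 ^ 2 - 1) * B = c -> z1 * A - (z1 ^ 2 - 1) * B = c ->
  A = (z0 + z1) * B /\ c = (1 + z0 * z1) * B.
Proof.
  intros hz e0 e1.
  assert (hA : A = (z0 + z1) * B).
  { apply (Rmult_eq_reg_l (z0 - z1)); [nra | lra]. }
  split; [exact hA | subst A; nra].
Qed.

Section CharacteristicPlane.

Variable P : params.

Lemma Utilde_V1_relation (z tau : R) :
  z * Utilde P z tau - (z ^ 2 - 1) * V1 P z tau = cc P.
Proof.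
  unfold Utilde, V1. assert (z ^ 2 + 1 <> 0) by nra. field; assumption.
Qed.

Lemma tau_from_state (z tau : R) :
  cc P * (z ^ 2 + 1) * tau = 2 * z * V1 P z tau - Utilde P z tau.
Proof.
  unfold Utilde, V1. assert (z ^ 2 + 1 <> 0) by nra. field; assumption.
Qed.

Lemma shock_speed_state (q : pt) :
  b1 P <> 0 ->
  shock_speed P q
  = Utilde P (pz q) (ptau q) / b1 P + pz q * V1 P (pz q) (ptau q) + sigma0 P.
Proof.
  intros hb. unfold shock_speed, Utilde, V1.
  assert (pz q ^ 2 + 1 <> 0) by nra. field; split; assumption.
Qed.

Lemma Hugoniot_inC_state (p q : pt) :
  b1 P <> 0 -> Hugoniot P p q -> inC q ->
  Utilde P (pz q) (ptau q) = Utilde P (pz p) (ptau p) + b1 P * pY p * pz p / 2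
  /\ V1 P (pz q) (ptau q) = V1 P (pz p) (ptau p) + pY p / 2.
Proof.
  unfold Hugoniot, Wl, inC, UU, VV. intros hb hH hY. rewrite hY in hH.
  injection hH as hU hV. split; [| lra].
  apply (f_equal (Rmult (b1 P))) in hU.
  replace (b1 P * _) with (Utilde P (pz q) (ptau q) - a1 P + a4 P) in hU
    by (field; exact hb).
  replace (b1 P * _) with (Utilde P (pz p) (ptau p) - a1 P + a4 P
                           + b1 P * pz p * pY p / 2) in hU
    by (field; exact hb).
  lra.
Qed.

Lemma Hugoniot_inC_pair (p q0 q1 : pt) :
  b1 P <> 0 -> 0 < cc P -> q0 <> q1 ->
  Hugoniot P p q0 -> inC q0 -> Hugoniot P p q1 -> inC q1 ->
  exists d, d <> 0
    /\ cc P * (pz q0 ^ 2 + 1) * ptau q0 = d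
    /\ cc P * (pz q1 ^ 2 + 1) * ptau q1 = - d
    /\ shock_speed P q0 - shock_speed P q1 = d.
Proof.
  intros hb hc hne h0 c0 h1 c1.
  destruct (Hugoniot_inC_state p q0 hb h0 c0) as [hU0 hV0].
  destruct (Hugoniot_inC_state p q1 hb h1 c1) as [hU1 hV1].
  set (A := Utilde P (pz p) (ptau p) + b1 P * pY p * pz p / 2) in *.
  set (B := V1 P (pz p) (ptau p) + pY p / 2) in *.
  pose proof (tau_from_state (pz q0) (ptau q0)) as t0.
  pose proof (tau_from_state (pz q1) (ptau q1)) as t1.
  rewrite hU0, hV0 in t0. rewrite hU1, hV1 in t1.
  assert (hz : pz q0 <> pz q1).
  { intro E. apply hne, pt_eq; [exact E | | unfold inC in *; congruence].
    rewrite <- E in t1.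
    apply (Rmult_eq_reg_l (cc P * (pz q0 ^ 2 + 1))); nra. }
  pose proof (Utilde_V1_relation (pz q0) (ptau q0)) as r0.
  pose proof (Utilde_V1_relation (pz q1) (ptau q1)) as r1.
  rewrite hU0, hV0 in r0. rewrite hU1, hV1 in r1.
  destruct (chord_relations _ _ _ _ _ hz r0 r1) as [hA hC].
  exists ((pz q0 - pz q1) * B). repeat split.
  - assert (B <> 0) by (intro E; rewrite E in hC; lra).
    apply Rmult_integral_contrapositive_currified; lra.
  - rewrite t0, hA. ring.
  - rewrite t1, hA. ring.
  - rewrite !shock_speed_state, hU0, hV0, hU1, hV1 by exact hb. ring.
Qed.

End CharacteristicPlane.

Theorem proposition1 (P : params) (hb1 : 1 < b1 P) (hc : 0 < a3 P - a2 P)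
  (p q0 q1 : pt) :
  q0 <> q1 ->
  Hugoniot P p q0 -> inC q0 ->
  Hugoniot P p q1 -> inC q1 ->
  (inCs q0 /\ inCf q1 /\ shock_speed P q0 < shock_speed P q1) \/
  (inCs q1 /\ inCf q0 /\ shock_speed P q1 < shock_speed P q0).
Proof.
  intros hne h0 c0 h1 c1.
  assert (hcc : 0 < cc P) by (unfold cc; exact hc).
  destruct (Hugoniot_inC_pair P p q0 q1 ltac:(lra) hcc hne h0 c0 h1 c1)
    as (d & hd & t0 & t1 & hs).
  assert (k0 : 0 < cc P * (pz q0 ^ 2 + 1)) by nra.
  assert (k1 : 0 < cc P * (pz q1 ^ 2 + 1)) by nra.
  unfold inCs, inCf.
  destruct (Rlt_dec 0 d) as [dpos | dneg].
  - right. repeat split; [exact c1 | nra | exact c0 | nra | lra].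
  - left. repeat split; [exact c0 | nra | exact c1 | nra | lra].
Qed.
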